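(* Let $f:\mathbb R^{d_x}\to\mathbb R^{d_y}$ be a $\textsc{ReLU}$+$\textsc{Step}$ network of width $d_x$ in which at least one hidden neuron uses the $\textsc{Step}$ activation. Then every level set of $f$ (i.e., every connected component of $f^{-1}(y)$ for some $y$) is unbounded unless it is empty.
   Context: $\textsc{ReLU}(x)=\max\{x,0\}$, $\textsc{Step}(x)=\mathbf 1[x\ge0]$. A $\textsc{ReLU}$+$\textsc{Step}$ network is $t_L\circ\sigma_{L-1}\circ\cdots\circ\sigma_1\circ t_1$ with affine $t_\ell:\mathbb R^{d_{\ell-1}}\to\mathbb R^{d_\ell}$ ($d_0=d_x$, $d_L=d_y$) and $\sigma_\ell$ applying to each coordinate an activation chosen per neuron from $\{\textsc{ReLU},\textsc{Step}\}$; its width is $\max\{d_1,\dots,d_{L-1}\}$. *)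

From mathcomp Require Import all_boot all_order all_algebra.
From mathcomp Require Import all_classical all_reals all_analysis.
Set Implicit Arguments. Unset Strict Implicit. Unset Printing Implicit Defensive.
Import Order.TTheory GRing.Theory Num.Theory.
Local Open Scope ring_scope.

Definition relu {R : realType} (x : R) : R := Num.max x 0.
Definition step {R : realType} (x : R) : R := if 0 <= x then 1 else 0.

(* NHid W b a N  : an affine layer t_l : R^n -> R^k followed by the
                   activation sigma_l, where neuron i uses Step if a i = true
                   and ReLU if a i = false, followed by the rest N. *)
Inductive net (R : realType) : nat -> nat -> Type :=
| NOut : forall n m, 'M[R]_(n, m) -> 'rV[R]_m -> net R n m
| NHid : forall n k m, 'M[R]_(n, k) -> 'rV[R]_k -> ('I_k -> bool) ->
    net R k m -> net R n m.

Definition act {R : realType} {k : nat} (a : 'I_k -> bool) (v : 'rV[R]_k)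
  : 'rV[R]_k := \row_i (if a i then step (v 0 i) else relu (v 0 i)).

Fixpoint net_eval {R : realType} {n m : nat} (N : net R n m) : 'rV[R]_n -> 'rV[R]_m :=
  match N with
  | NOut _ _ W b => fun x => x *m W + b
  | NHid _ _ _ W b a N' => fun x => net_eval N' (act a (x *m W + b))
  end.

Fixpoint width {R : realType} {n m : nat} (N : net R n m) : nat :=
  match N with
  | NOut _ _ _ _ => 0%N
  | NHid _ k _ _ _ _ N' => maxn k (width N')
  end.

Fixpoint has_step {R : realType} {n m : nat} (N : net R n m) : Prop :=
  match N with
  | NOut _ _ _ _ => False
  | NHid _ k _ _ _ a N' => (exists i : 'I_k, a i = true) \/ has_step N'
  end.

From mathcomp Require Import all_boot all_order all_algebra.
From mathcomp Require Import all_classical all_reals all_analysis.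
From mathcomp Require Import lra.
Import Order.TTheory GRing.Theory Num.Theory.
Import numFieldNormedType.Exports.
Set Implicit Arguments. Unset Strict Implicit.
Local Open Scope ring_scope.
Local Open Scope classical_set_scope.

(* Say that S escapes at p if S contains a polygonal path from p that ends in
   a ray with nonzero direction; the component of S through p is then
   unbounded.  By induction on the layers, every level set of the network
   escapes at each of its points.  A first layer x |-> x W + b with at most
   dx neurons either has a kernel, along which the network is constant, or is
   an affine bijection, which transports escaping paths.  Behind it, a Step
   neuron is constant along the ray pushing its input away from 0, and ReLU
   neurons preserve escape: from relu(z), follow the path while it stays in
   the nonnegative orthant and, when a coordinate j first hits 0 on its way
   down, turn into the ray -e_j, along which relu is constant. *)

Section Escape.
Variables (R : realType) (V : normedModType R).
Implicit Types (S : set V) (p q v : V) (ps : seq V).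

Fixpoint polyray S p ps v : Prop :=
  if ps is q :: ps' then
    (forall t : R, 0 <= t <= 1 -> S (p + t *: (q - p))) /\ polyray S q ps' v
  else forall t : R, 0 <= t -> S (p + t *: v).

Definition escapes S p := exists ps v, v != 0 /\ polyray S p ps v.

Lemma connected_line p v (A : set R) : is_interval A ->
  connected [set p + t *: v | t in A].
Proof.
move=> /connected_intervalP A_conn; apply: connected_continuous_connected => //.
apply: continuous_subspaceT => t.
by apply: cvgD; [exact: cvg_cst | exact: scalel_continuous].
Qed.

Lemma polyray_component S p ps v : polyray S p ps v ->
  forall t, 0 <= t -> connected_component S p (last p ps + t *: v).
Proof.
elim: ps p => [|q ps IH] p /=.
  move=> Sray t t0.
  apply: (@connected_component_max _ _ [set p + s *: v | s in `[0, +oo[]).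
  - by exists 0; rewrite ?scale0r ?addr0 //= in_itv /= lexx.
  - by move=> _ [s s0 <-]; apply: Sray; move: s0; rewrite /= in_itv /= andbT.
  - exact/connected_line/interval_is_interval.
  - by exists t; rewrite //= in_itv /= t0.
move=> [Sseg Sps] t t0.
have pq : connected_component S p q.
  apply: (@connected_component_max _ _ [set p + s *: (q - p) | s in `[0, 1]]).
  - by exists 0; rewrite ?scale0r ?addr0 //= in_itv /= lexx ler01.
  - by move=> _ [s s01 <-]; apply: Sseg; move: s01; rewrite /= in_itv.
  - exact/connected_line/interval_is_interval.
  - by exists 1; rewrite /= ?in_itv /= ?ler01 ?lexx // scale1r addrC subrK.
by rewrite (same_connected_component pq); apply: IH.
Qed.

Lemma ray_unbounded (A : set V) p v : v != 0 ->
  (forall t, 0 <= t -> A (p + t *: v)) -> ~ bounded_set A.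
Proof.
move=> v0 Aray /ex_strict_bound_gt0[M M0 AM].
have v_gt0 : 0 < `|v| by rewrite normr_gt0.
pose t := (M + `|p|) / `|v|.
have t0 : 0 <= t by rewrite divr_ge0 // addr_ge0 // ltW.
have := AM _ (Aray t t0); apply/negP; rewrite -leNgt -(lerD2r `|p|).
have := ler_normB (p + t *: v) p; rewrite addrAC subrr add0r.
by rewrite normrZ ger0_norm // divfK ?gt_eqF.
Qed.

Lemma escapes_unbounded S p : escapes S p -> ~ bounded_set (connected_component S p).
Proof.
by move=> [ps [v [v0 /polyray_component Sps]]]; apply: ray_unbounded v0 Sps.
Qed.

Lemma polyray_sub S S' p ps v : S `<=` S' -> polyray S p ps v -> polyray S' p ps v.
Proof.
move=> SS'; elim: ps p => [|q ps IH] p /=; first by move=> Sray t /Sray/SS'.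
by move=> [Sseg /IH Sps]; split=> // t /Sseg/SS'.
Qed.

Lemma escapes_sub S S' p : S `<=` S' -> escapes S p -> escapes S' p.
Proof. by move=> SS' [ps [v [v0 /(polyray_sub SS')]]]; exists ps, v. Qed.

Lemma escapes_ray S p v : v != 0 -> (forall t, 0 <= t -> S (p + t *: v)) ->
  escapes S p.
Proof. by move=> v0 Sray; exists [::], v. Qed.

Lemma escapes_cons S p q : (forall t, 0 <= t <= 1 -> S (p + t *: (q - p))) ->
  escapes S q -> escapes S p.
Proof. by move=> Sseg [ps [v [v0 Sps]]]; exists (q :: ps), v. Qed.

Lemma polyray_mem S p ps v : polyray S p ps v -> S p.
Proof.
case: ps => [|q ps] /= => [Sray|[Sseg _]].
  by have := Sray 0; rewrite scale0r addr0 lexx; apply.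
by have := Sseg 0; rewrite scale0r addr0 lexx ler01; apply.
Qed.

Lemma escapes_mem S p : escapes S p -> S p.
Proof. by move=> [ps [v [_ /polyray_mem]]]. Qed.

End Escape.

Section AffinePreimage.
Variables (R : realType) (V W : normedModType R).
Variables (f : {linear V -> W}) (g : {linear W -> V}).
Hypothesis gK : cancel g f.
Variable b : W.

Lemma polyray_affine_preim (S : set W) p ps v : polyray S p ps v ->
  polyray [set z | S (f z + b)] (g (p - b)) [seq g (u - b) | u <- ps] (g v).
Proof.
have lift p' d t : f (g (p' - b) + t *: g d) + b = p' + t *: d.
  by rewrite linearD linearZZ !gK addrAC subrK.
elim: ps p => [|q ps IH] p /=; first by move=> Sray t /Sray; rewrite /= lift.
move=> [Sseg /IH Sps]; split=> // t /Sseg.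
by rewrite /= -linearB opprB addrA subrK lift.
Qed.

Lemma escapes_affine_preim (S : set W) x : escapes S (f x + b) ->
  escapes [set z | S (f z + b)] x.
Proof.
move=> Sx; have Sfx := escapes_mem Sx; move: Sx => [ps [v [v0 Sps]]].
apply: (escapes_cons (q := g (f x + b - b))).
  by move=> t _; rewrite /= addrK linearD linearZZ linearB gK subrr scaler0 addr0.
exists [seq g (u - b) | u <- ps], (g v); split; last exact: polyray_affine_preim.
by apply: contra_neq v0 => gv0; rewrite -[v]gK gv0 linear0.
Qed.

End AffinePreimage.

Section ReluPreimage.
Variables (R : realType) (n : nat).
Implicit Types (S : set 'rV[R]_n) (p q c d v z : 'rV[R]_n).

Definition nneg_row z := forall i, 0 <= z 0 i.

Lemma map_relu_nneg z : nneg_row z -> map_mx relu z = z.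
Proof. by move=> z_ge0; apply/rowP => i; rewrite mxE /relu max_l. Qed.

Lemma nneg_map_relu z : nneg_row (map_mx relu z).
Proof. by move=> i; rewrite mxE /relu le_max lexx orbT. Qed.

Lemma nneg_row_segment p q t : nneg_row p -> nneg_row q -> 0 <= t <= 1 ->
  nneg_row (p + t *: (q - p)).
Proof.
move=> p_ge0 q_ge0 /andP[t_ge0 t_le1] i; rewrite !mxE.
have := p_ge0 i; have := q_ge0 i; nra.
Qed.

Lemma map_relu_segment q t : 0 <= t <= 1 ->
  map_mx relu (q + t *: (map_mx relu q - q)) = map_mx relu q.
Proof.
move=> /andP[t_ge0 t_le1]; apply/rowP => i; rewrite !mxE /relu.
have [q_ge0|q_lt0] := leP 0 (q 0 i); first by rewrite subrr mulr0 addr0 max_l.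
rewrite max_r //; nra.
Qed.

Lemma map_relu_down c j t : nneg_row c -> c 0 j = 0 -> 0 <= t ->
  map_mx relu (c + t *: - delta_mx 0 j) = c.
Proof.
move=> c_ge0 cj0 t_ge0; apply/rowP => i; rewrite !mxE /relu.
have [->|ij] := eqVneq i j; last by rewrite andbF mulr0n oppr0 mulr0 addr0 max_l.
by rewrite eqxx cj0 add0r mulrN mulr1 max_r // oppr_le0.
Qed.

Lemma first_exit p d i0 : nneg_row p -> d 0 i0 < 0 ->
  exists s j, [/\ 0 <= s, (p + s *: d) 0 j = 0 &
    forall t, 0 <= t <= s -> nneg_row (p + t *: d)].
Proof.
move=> p_ge0 di0_lt0.
pose exit_time i := p 0 i / - d 0 i.
have [j dj_lt0 j_min] := arg_minP exit_time (P := fun i => d 0 i < 0) di0_lt0.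
have dj_gt0 : 0 < - d 0 j by rewrite oppr_gt0.
exists (exit_time j), j; split.
- by rewrite divr_ge0 // ltW.
- by rewrite !mxE /exit_time mulrAC invrN mulrN mulfK ?subrr // lt_eqF.
move=> t /andP[t_ge0 t_le] i; rewrite !mxE.
have [di_ge0|di_lt0] := leP 0 (d 0 i); first by rewrite addr_ge0 // mulr_ge0.
have : t <= exit_time i by apply: le_trans t_le (j_min _ di_lt0).
by rewrite /exit_time ler_pdivlMr ?oppr_gt0 // mulrN -subr_ge0 opprK.
Qed.

Lemma escapes_relu_exit S p d i : nneg_row p -> d 0 i < 0 ->
  (forall t, 0 <= t -> nneg_row (p + t *: d) -> S (p + t *: d)) ->
  escapes [set z | S (map_mx relu z)] p.
Proof.
move=> p_ge0 di_lt0 Sd.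
have [s [j [s_ge0 cj0 nneg_before]]] := first_exit p_ge0 di_lt0.
have c_ge0 : nneg_row (p + s *: d) by apply: nneg_before; rewrite s_ge0 lexx.
apply: (escapes_cons (q := p + s *: d)).
  move=> t /andP[t_ge0 t_le1]; rewrite /= addrAC subrr add0r scalerA.
  have ts : 0 <= t * s <= s by rewrite mulr_ge0 //= ler_piMl.
  have nneg_ts := nneg_before _ ts.
  by rewrite map_relu_nneg //; apply: Sd; case/andP: ts.
apply: (escapes_ray (v := - delta_mx 0 j)).
  by apply/eqP => /rowP/(_ j)/eqP; rewrite !mxE !eqxx /= oppr_eq0 oner_eq0.
by move=> t t_ge0; rewrite /= map_relu_down //; apply: Sd; rewrite ?lexx.
Qed.

Lemma escapes_relu_preim_nneg S p : nneg_row p -> escapes S p ->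
  escapes [set z | S (map_mx relu z)] p.
Proof.
move=> + [ps [v [v0 Sps]]].
elim: ps p Sps => [|q ps IH] p /= => [Sray|[Sseg Sps]] p_ge0.
  have [/existsP[i vi_lt0]|/existsPn v_ge0] := boolP [exists i, v 0 i < 0].
    by apply: escapes_relu_exit p_ge0 vi_lt0 _ => t t_ge0 _; apply: Sray.
  apply: escapes_ray v0 _ => t t_ge0; rewrite /= map_relu_nneg; first exact: Sray.
  by move=> i; rewrite !mxE addr_ge0 // mulr_ge0 // leNgt v_ge0.
have [/existsP[i qi_lt0]|/existsPn q_ge0] := boolP [exists i, q 0 i < 0].
  have di_lt0 : (q - p) 0 i < 0 by rewrite !mxE subr_lt0 (lt_le_trans qi_lt0).
  apply: (escapes_relu_exit p_ge0 di_lt0) => t t_ge0 nneg_t; apply: Sseg.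
  rewrite t_ge0 /=; have := nneg_t i; have := p_ge0 i; rewrite !mxE; nra.
have {}q_ge0 : nneg_row q by move=> i; rewrite leNgt q_ge0.
apply: escapes_cons (IH q Sps q_ge0) => t t01.
by rewrite /= map_relu_nneg; [exact: Sseg | exact: nneg_row_segment].
Qed.

Lemma escapes_relu_preim S q : escapes S (map_mx relu q) ->
  escapes [set z | S (map_mx relu z)] q.
Proof.
move=> Sq; apply: (escapes_cons (q := map_mx relu q)).
  by move=> t t01; rewrite /= map_relu_segment //; exact: escapes_mem Sq.
exact: escapes_relu_preim_nneg (nneg_map_relu q) Sq.
Qed.

End ReluPreimage.

Section Layers.
Variable R : realType.

Lemma escapes_mulmx_fiber n k (W : 'M[R]_(n, k)) (x : 'rV[R]_n) :
  ~~ row_free W -> escapes [set z | z *m W = x *m W] x.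
Proof.
rewrite -kermx_eq0 => /rowV0Pn[v /sub_kermxP vW0 v0].
by apply: escapes_ray v0 _ => t _; rewrite /= mulmxDl -scalemxAl vW0 scaler0 addr0.
Qed.

Lemma escapes_step_level k (a : 'I_k -> bool) (z0 : 'rV[R]_k) i : a i ->
  escapes [set z | act a z = act a z0] z0.
Proof.
move=> ai; pose sgn : R := if 0 <= z0 0 i then 1 else -1.
apply: (escapes_ray (v := sgn *: delta_mx 0 i)).
  apply/eqP => /rowP/(_ i)/eqP; rewrite !mxE !eqxx /= mulr1 /sgn.
  by case: ifP => _; rewrite ?oppr_eq0 oner_eq0.
move=> t t_ge0; apply/rowP => j; rewrite /= !mxE.
have [->|ji] := eqVneq j i; last by rewrite andbF mulr0 mulr0 addr0.
rewrite ai eqxx /= mulr1 /step /sgn.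
have [z0_ge0|z0_lt0] := leP 0 (z0 0 i); first by rewrite mulr1 addr_ge0.
by rewrite mulrN1 leNgt (le_lt_trans _ z0_lt0) // lerBlDr lerDl.
Qed.

Lemma act_all_relu k (a : 'I_k -> bool) (z : 'rV[R]_k) : (forall i, ~~ a i) ->
  act a z = map_mx relu z.
Proof. by move=> a_relu; apply/rowP => i; rewrite !mxE (negbTE (a_relu i)). Qed.

Lemma escapes_act_level k m (a : 'I_k -> bool) (N : net R k m) u :
  ((exists i, a i) \/ has_step N) ->
  (has_step N -> forall z, escapes [set z' | net_eval N z' = net_eval N z] z) ->
  escapes [set z | net_eval N (act a z) = net_eval N (act a u)] u.
Proof.
move=> has_stepN IH.
have [/existsP[i ai]|/existsPn a_relu] := boolP [exists i, a i].
  by apply: escapes_sub (escapes_step_level u ai) => z /= ->.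
have {}has_stepN : has_step N.
  by case: has_stepN => // -[i ai]; have := a_relu i; rewrite ai.
apply: escapes_sub (escapes_relu_preim (IH has_stepN (map_mx relu u))) => z /=.
by rewrite !act_all_relu.
Qed.

Lemma net_level_escapes n m (N : net R n m) : has_step N -> (width N <= n)%N ->
  forall x, escapes [set z | net_eval N z = net_eval N x] x.
Proof.
elim: N => [//|{}n k {}m W b a N IH] /= has_stepN.
rewrite geq_max => /andP[kn wN] x.
have [Wfree|Wnfree] := boolP (row_free W); last first.
  by apply: escapes_sub (escapes_mulmx_fiber x Wnfree) => z /= ->.
have Wfull : row_full W by rewrite -col_leq_rank (eqP Wfree).
have nk : (n <= k)%N by rewrite -(eqP Wfree) rank_leq_col.
have pinvK : cancel (@mulmxr _ 1 _ _ (pinvmx W)) (mulmxr W).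
  by move=> u /=; apply/mulmxKpV/submx_full.
apply: (@escapes_affine_preim _ _ _ _ _ pinvK b
  [set u | net_eval N (act a u) = net_eval N (act a (x *m W + b))] x).
by apply: escapes_act_level has_stepN _ => /IH; apply; exact: leq_trans wN nk.
Qed.

End Layers.

Theorem lemma15 (R : realType) (dx dy : nat) (N : net R dx dy) :
  width N = dx -> has_step N ->
  forall (y : 'rV[R]_dy) (x : 'rV[R]_dx), net_eval N x = y ->
  ~ bounded_set (@connected_component [the normedModType R of 'rV[R]_dx]
      (net_eval N @^-1` [set y]) x).
Proof.
move=> widthN has_stepN y x <-.
exact/escapes_unbounded/net_level_escapes/eq_leq.
Qed.
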